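(* Let $\mathcal{E}$ be a finite labeled prime event structure. Then $\mathcal{L}(\mathcal{E})=\mathcal{L}(\mathcal{A}^{\mathcal{E}})$.
   Context: A finite $\mathcal{X}$-labeled prime event structure is $\mathcal{E}=\langle E,<,\#,h\rangle$ with finite $E$, strict partial order $<$, labeling $h:E\to\mathcal{X}$, and symmetric irreflexive conflict relation $\#$ closed under $<$ (if $e\#e'$ and $e'<e''$ then $e\#e''$); $\mathcal{X}$ contains $\varepsilon$ denoting the empty word; there is an event $\bot$ below all other events with $h(\bot)=\varepsilon$. A configuration is a left-closed, conflict-free subset of $E$; maximal if no configuration strictly contains it. A trace of a configuration lists each of its events exactly once respecting $<$; $\mathcal{L}(\mathcal{E})$ is the set of words $h(t)$ (pointwise, $\varepsilon$ omitted) for traces $t$ of maximal configurations. The automaton encoding is the NFA $\mathcal{A}^{\mathcal{E}}=\langle Q^{\mathcal{E}},\mathcal{X},\delta^{\mathcal{E}},q_0,F\rangle$ with $Q^{\mathcal{E}}=\{q_C\mid C$ a configuration of $\mathcal{E}\}$, $(q_{C_1},\sigma,q_{C_2})\in\delta^{\mathcal{E}}$ iff there is $e\in E$ with $C_1\cup\{e\}=C_2$ and $h(e)=\sigma$ (transitions labeled $\varepsilon$ are $\varepsilon$-moves), $q_0=q_{\{\bot\}}$, and $F=\{q_C\mid C$ maximal$\}$; $\mathcal{L}(\mathcal{A}^{\mathcal{E}})$ is its accepted language. *)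

From mathcomp Require Import all_boot.
Set Implicit Arguments. Unset Strict Implicit. Unset Printing Implicit Defensive.

(* Words: seq X; the distinguished letter [eps] denotes the empty word and is
   erased when reading off a word. *)
Definition erase (X : eqType) (eps : X) (s : seq X) : seq X :=
  [seq x <- s | x != eps].

Section PES.
Variables (X : eqType) (eps : X) (E : finType).
Variables (lt cf : rel E) (h : E -> X) (bot : E).

Definition is_pes : Prop :=
  [/\ irreflexive lt & transitive lt] /\
  [/\ symmetric cf, irreflexive cf
    & (forall e e' e'', cf e e' -> lt e' e'' -> cf e e'')] /\
  (forall e, e != bot -> lt bot e) /\ h bot = eps.

Definition is_config (C : {set E}) : Prop :=
  (forall e e', e \in C -> lt e' e -> e' \in C) /\
  (forall e e', e \in C -> e' \in C -> ~~ cf e e').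

Definition is_max_config (C : {set E}) : Prop :=
  is_config C /\ ~ (exists C', is_config C' /\ C \proper C').

Definition is_trace (C : {set E}) (t : seq E) : Prop :=
  [/\ uniq t, (forall e, (e \in t) = (e \in C))
    & (forall e e', e \in t -> e' \in t -> lt e e' -> index e t < index e' t)].

Definition pes_lang (w : seq X) : Prop :=
  exists C t, is_max_config C /\ is_trace C t /\ erase eps (map h t) = w.
End PES.

Record nfa (X : Type) := Nfa {
  nfa_state : Type;
  nfa_delta : nfa_state -> X -> nfa_state -> Prop;
  nfa_init : nfa_state;
  nfa_final : nfa_state -> Prop }.

Arguments nfa_delta {X} n _ _ _.
Arguments nfa_init {X} n.
Arguments nfa_final {X} n _.
Inductive nfa_run (X : Type) (A : nfa X) : nfa_state A -> seq X -> nfa_state A -> Prop :=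
| run_nil q : @nfa_run X A q [::] q
| run_cons q s q' l q'' :
    nfa_delta A q s q' -> @nfa_run X A q' l q'' -> @nfa_run X A q (s :: l) q''.

Definition nfa_lang (X : eqType) (eps : X) (A : nfa X) (w : seq X) : Prop :=
  exists l q, @nfa_run X A (nfa_init A) l q /\ nfa_final A q /\ erase eps l = w.

(* States: subsets of E; only configurations take part in transitions, so the
   effective state space is { q_C | C configuration }. *)
Definition pes_nfa (X : eqType) (E : finType) (lt cf : rel E) (h : E -> X)
    (bot : E) : nfa X :=
  @Nfa X {set E}
    (fun C1 s C2 => is_config lt cf C1 /\ is_config lt cf C2 /\
        exists e, e \notin C1 /\ C1 :|: [set e] = C2 /\ h e = s)
    [set bot]
    (fun C => is_max_config lt cf C).

From mathcomp Require Import all_boot.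

Set Implicit Arguments.
Unset Strict Implicit.
Unset Printing Implicit Defensive.

(* A run of the automaton from the configuration {bot} adds one event at a
   time, each time to a configuration; reading off the added events gives a
   trace of the final configuration, and conversely every prefix of a trace is
   a configuration, so a trace can be replayed as a run.  Since bot lies below
   every other event it heads every trace, and its label eps is erased. *)

Section Traces.
Variables (E : finType) (lt cf : rel E).

Lemma trace_setE C t : is_trace lt C t -> [set x in t] = C.
Proof. by case=> _ tC _; apply/setP => x; rewrite inE tC. Qed.

Lemma trace_take_config C t k :
  is_config lt cf C -> is_trace lt C t -> is_config lt cf [set x in take k t].
Proof.
move=> [Cl Ccf] [_ tC tlt]; split.
- move=> e e'; rewrite !inE => ek e'e.
  have et := mem_take ek.
  have e't : e' \in t by rewrite tC (Cl e) // -tC.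
  rewrite (in_take _ et) in ek.
  by rewrite (in_take _ e't) (ltn_trans (tlt _ _ e't et e'e)).
- by move=> e e'; rewrite !inE => /mem_take + /mem_take; rewrite !tC; apply: Ccf.
Qed.

Lemma trace_rcons C t e :
  irreflexive lt -> is_config lt cf C -> is_trace lt C t -> e \notin C ->
  is_trace lt (C :|: [set e]) (rcons t e).
Proof.
move=> lt_irr [Cl _] [tu tC tlt] eC.
have et : e \notin t by rewrite tC.
have index_t x : x \in t -> index x (rcons t e) = index x t.
  by move=> xt; rewrite -cats1 index_cat xt.
have index_e : index e (rcons t e) = size t.
  by rewrite -cats1 index_cat (negbTE et) /= eqxx addn0.
split.
- by rewrite rcons_uniq et tu.
- by move=> x; rewrite mem_rcons !inE tC orbC.
move=> x y; rewrite !mem_rcons !in_cons.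
case: (eqVneq x e) => [-> | xe]; case: (eqVneq y e) => [-> | ye] //=.
- by rewrite lt_irr.
- by move=> _ yt ey; case/negP: eC; apply: Cl ey; rewrite -tC.
- by move=> xt _ _; rewrite index_e index_t // index_mem.
- by move=> xt yt xy; rewrite !index_t //; apply: tlt.
Qed.

End Traces.

Section Runs.
Variables (X : eqType) (E : finType) (lt cf : rel E) (h : E -> X) (bot : E).
Local Notation A := (pes_nfa lt cf h bot).

Lemma pes_run_suffix p q :
  uniq (p ++ q) -> (forall k, is_config lt cf [set x in take k (p ++ q)]) ->
  nfa_run (A := A) [set x in p] (map h q) [set x in p ++ q].
Proof.
elim: q p => [|e q IH] p; first by rewrite cats0; constructor.
rewrite -cat_rcons => pq_uniq pq_config.
apply: run_cons (IH _ pq_uniq pq_config); split; last split.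
- by have := pq_config (size p); rewrite cat_rcons take_size_cat.
- by have := pq_config (size p).+1; rewrite take_size_cat ?size_rcons.
exists e; split; [|split=> //].
- have := cat_uniq (rcons p e) q; rewrite pq_uniq rcons_uniq.
  by case/esym/andP => /andP [+ _] _; rewrite inE.
- by apply/setP => x; rewrite !inE mem_rcons in_cons orbC.
Qed.

Lemma pes_run_trace C l C' t :
  irreflexive lt -> nfa_run (A := A) C l C' -> is_trace lt C t ->
  exists2 t', is_trace lt C' (t ++ t') & l = map h t'.
Proof.
move=> lt_irr run; elim: run t => [D | D s D' l' D'' step _ IH] t Dt.
  by exists [::]; rewrite ?cats0.
case: step => [Dconf [_ [e [eD [De <-]]]]]; subst D'.
have [t' Dt' ->] := IH _ (trace_rcons lt_irr Dconf Dt eD).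
by exists (e :: t'); rewrite -?cat_rcons.
Qed.

End Runs.

Section Bottom.
Variables (X : eqType) (eps : X) (E : finType) (lt cf : rel E).
Variables (h : E -> X) (bot : E).
Hypotheses (lt_irr : irreflexive lt) (lt_trans : transitive lt).
Hypotheses (cf_irr : irreflexive cf) (bot_lt : forall e, e != bot -> lt bot e).

Lemma not_lt_bot e : ~~ lt e bot.
Proof.
apply/negP => ebot; have [eb | /bot_lt bote] := eqVneq e bot.
  by move: ebot; rewrite eb lt_irr.
by move: (lt_trans bote ebot); rewrite lt_irr.
Qed.

Lemma config_bot : is_config lt cf [set bot].
Proof.
split=> e e'; rewrite !inE => /eqP ->; first by rewrite (negbTE (not_lt_bot _)).
by move=> /eqP ->; rewrite cf_irr.
Qed.

Lemma trace_bot : is_trace lt [set bot] [:: bot].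
Proof.
split=> // [e | e e']; first by rewrite !inE.
by rewrite !inE => /eqP -> /eqP ->; rewrite lt_irr.
Qed.

Lemma max_config_bot C : is_max_config lt cf C -> bot \in C.
Proof.
case=> [[Cl _] Cmax]; apply/negPn/negP => botC; apply: Cmax.
exists [set bot]; split; first exact: config_bot.
apply/properP; split; last by exists bot; rewrite ?inE.
apply/subsetP => e eC; case/negP: botC.
by have [<- // | /bot_lt] := eqVneq e bot; apply: Cl.
Qed.

Lemma trace_headE C t : is_trace lt C t -> bot \in C -> t = bot :: behead t.
Proof.
case: t => [|e t] [_ tC tlt]; rewrite -tC ?in_nil //.
have [-> // | /bot_lt bote] := eqVneq e bot.
by move=> /tlt /(_ (mem_head _ _) bote); rewrite /= eqxx; case: ifP.
Qed.

Lemma erase_map_bot t :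
  h bot = eps -> erase eps (map h (bot :: t)) = erase eps (map h t).
Proof. by move=> h_bot; rewrite /erase /= h_bot eqxx. Qed.

End Bottom.

Theorem lemma5 (X : eqType) (eps : X) (E : finType) (lt cf : rel E)
    (h : E -> X) (bot : E) :
  is_pes eps lt cf h bot ->
  forall w : seq X,
    pes_lang eps lt cf h w <-> nfa_lang eps (pes_nfa lt cf h bot) w.
Proof.
case=> [[lt_irr lt_trans] [[_ cf_irr _] [bot_lt h_bot]]] w; split.
- case=> C [t [Cmax [Ct <-]]].
  have botC := max_config_bot lt_irr lt_trans cf_irr bot_lt Cmax.
  have tE := trace_headE bot_lt Ct botC.
  exists (map h (behead t)), C; split; last by rewrite tE erase_map_bot.
  have := @pes_run_suffix X E lt cf h bot [:: bot] (behead t).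
  rewrite cat1s -tE (trace_setE Ct) (trace_setE (trace_bot _ lt_irr)).
  apply; first by case: Ct.
  by move=> k; apply: trace_take_config Ct; case: Cmax.
- case=> l [C [run [Cmax <-]]].
  have [t Ct ->] := pes_run_trace lt_irr run (trace_bot _ lt_irr).
  by exists C, (bot :: t); rewrite erase_map_bot.
Qed.
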